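(* In the setting described in the context: (a) if $S(i)=S(i+1)$ for every $i\in E$ (the signal is constant on each $A_i$), then $\sum_{z=0}^{N/2-1}|(W\lambda)(z)|^2\ge1-\frac{2M}{N}$; (b) if $S(i)\ne S(i+1)$ for every $i\in E$ (the signal is balanced on each $A_i$), then $\sum_{z=N/2}^{N-1}|(W\lambda)(z)|^2\ge1-\frac{2M}{N}$. The same two conclusions hold with $W$ replaced by $W_1$.
   Context: Let $N=2^n$, $n\ge1$, and $M\ge1$ with $2M<N$. Let $E\subset\{0,\dots,N-1\}$ be a set of $M$ even labels, $A_i=\{i,i+1\}$ for $i\in E$, and $A=\bigcup_{i\in E}A_i$ (so $|A|=2M$). Let $S:\{0,\dots,N-1\}\to\{0,1\}$ be arbitrary (its values outside $A$ are unrestricted). Let $\theta\in(0,\pi/2)$ with $\sin\theta=\sqrt{2M/N}$, $k=\lfloor\pi/(4\theta)\rfloor$, $a_k=\frac{\sin((2k+1)\theta)}{\sqrt{2M}}$, $b_k=\frac{\cos((2k+1)\theta)}{\sqrt{N-2M}}$, and $\lambda(z)=a_k(-1)^{S(z)}$ for $z\in A$, $\lambda(z)=b_k(-1)^{S(z)}$ for $z\notin A$. Haar wavelet transform: for $k=1,\dots,n$ let $m=n-k+1$ and let $H_k$ be the $2^m\times2^m$ matrix with, for $0\le j<2^{m-1}$, $(H_k)_{j,2j}=(H_k)_{j,2j+1}=\frac1{\sqrt2}$, $(H_k)_{2^{m-1}+j,2j}=\frac1{\sqrt2}$, $(H_k)_{2^{m-1}+j,2j+1}=-\frac1{\sqrt2}$,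 all other entries $0$; let $W_k=\begin{pmatrix}H_k&0\\0&I_{2^n-2^m}\end{pmatrix}$ and $W=W_nW_{n-1}\cdots W_1$. *)

From Stdlib Require Import Reals List Arith.
Import ListNotations.
Open Scope R_scope.

(* Vectors of length N = 2^n are functions nat -> R; only indices < N matter. *)

Fixpoint rsum (n : nat) (f : nat -> R) : R :=
  match n with
  | O => 0
  | S p => rsum p f + f p
  end.

(* Action of W_k = diag(H_k, I) where H_k is the 2^m x 2^m Haar block:
   rows j < 2^(m-1): (v(2j)+v(2j+1))/sqrt 2;
   rows 2^(m-1)+j:   (v(2j)-v(2j+1))/sqrt 2;
   rows >= 2^m: identity. *)
Definition haar_step (m : nat) (v : nat -> R) : nat -> R :=
  fun r =>
    if Nat.ltb r (2 ^ (m - 1)) then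
      (v (2 * r)%nat + v (2 * r + 1)%nat) / sqrt 2
    else if Nat.ltb r (2 ^ m) then
      (v (2 * (r - 2 ^ (m - 1)))%nat - v (2 * (r - 2 ^ (m - 1)) + 1)%nat) / sqrt 2
    else v r.

Definition Wk (n k : nat) (v : nat -> R) : nat -> R := haar_step (n - k + 1) v.

Fixpoint W_upto (n k : nat) (v : nat -> R) : nat -> R :=
  match k with
  | O => v
  | S p => Wk n (S p) (W_upto n p v)
  end.

Definition haarW (n : nat) (v : nat -> R) : nat -> R := W_upto n n v.

Definition inA (E : list nat) (z : nat) : bool :=
  existsb (fun i => orb (Nat.eqb z i) (Nat.eqb z (i + 1))) E.

(* (-1)^{S z} with S : nat -> bool encoding S : {0..N-1} -> {0,1} *)
Definition sgn (b : bool) : R := if b then -1 else 1.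

Definition kIter (theta : R) : nat := Z.to_nat (Int_part (PI / (4 * theta))).

Definition a_k (N M : nat) (theta : R) : R :=
  sin ((2 * INR (kIter theta) + 1) * theta) / sqrt (2 * INR M).
Definition b_k (N M : nat) (theta : R) : R :=
  cos ((2 * INR (kIter theta) + 1) * theta) / sqrt (INR N - 2 * INR M).

Definition lam (N M : nat) (E : list nat) (S : nat -> bool) (theta : R)
  : nat -> R :=
  fun z => (if inA E z then a_k N M theta else b_k N M theta) * sgn (S z).

Definition lowEnergy (N : nat) (v : nat -> R) : R :=
  rsum (N / 2) (fun z => (v z) ^ 2).
Definition highEnergy (N : nat) (v : nat -> R) : R :=
  rsum (N - N / 2) (fun z => (v (N / 2 + z)%nat) ^ 2).

(* The transforms W_2, ..., W_n only mix coordinates among the first N/2 and are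
   orthogonal there, so W has the same energy as W_1 on the low half and agrees
   with W_1 on the high half; it suffices to treat W_1.  W_1 sends the pair
   (i, i+1), i in E, to the low coefficient (λ_i + λ_{i+1})/√2 and the high
   coefficient (λ_i - λ_{i+1})/√2.  Under the hypothesis of (a), resp. (b), the
   low, resp. high, one equals ±√2 a_k, and distinct i give distinct
   coefficients, so the energy is at least 2 M a_k^2 = sin^2((2k+1)θ).  The
   choice of k puts (2k+1)θ within θ of π/2, whence sin^2((2k+1)θ) >= cos^2 θ
   = 1 - 2M/N. *)

From Stdlib Require Import Reals List Arith Lia Lra ZArith.
Open Scope R_scope.

Lemma rsum_ext p f g :
  (forall i, (i < p)%nat -> f i = g i) -> rsum p f = rsum p g.
Proof.
  induction p as [|p IH]; intros Hfg; cbn [rsum]; [reflexivity|].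
  rewrite IH by (intros; apply Hfg; lia). rewrite Hfg by lia. reflexivity.
Qed.

Lemma rsum_plus p f g : rsum p (fun i => f i + g i) = rsum p f + rsum p g.
Proof. induction p as [|p IH]; cbn [rsum]; [ring|]. rewrite IH; ring. Qed.

Lemma rsum_add p q f :
  rsum (p + q) f = rsum p f + rsum q (fun i => f (p + i)%nat).
Proof.
  induction q as [|q IH]; cbn [rsum].
  - rewrite Nat.add_0_r; ring.
  - rewrite Nat.add_succ_r; cbn [rsum]. rewrite IH; ring.
Qed.

Lemma rsum_double p f :
  rsum (2 * p) f = rsum p (fun j => f (2 * j)%nat + f (2 * j + 1)%nat).
Proof.
  induction p as [|p IH]; [reflexivity|].
  replace (2 * S p)%nat with (S (S (2 * p))) by lia. cbn [rsum].
  rewrite IH. replace (2 * p + 1)%nat with (S (2 * p)) by lia. ring.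
Qed.

Lemma rsum_ge0 p f : (forall i, 0 <= f i) -> 0 <= rsum p f.
Proof. intros Hf; induction p; cbn [rsum]; [lra|]. specialize (Hf p); lra. Qed.

Lemma rsum_extract p f x : (x < p)%nat ->
  rsum p f = f x + rsum p (fun z => if Nat.eqb z x then 0 else f z).
Proof.
  induction p as [|p IH]; intros Hx; [lia|]. cbn [rsum].
  destruct (Nat.eq_dec x p) as [->|Hxp].
  - rewrite Nat.eqb_refl, (rsum_ext p (fun z => if Nat.eqb z p then 0 else f z) f);
      [ring|].
    intros i Hi. destruct (Nat.eqb_spec i p); [lia|reflexivity].
  - rewrite IH by lia. destruct (Nat.eqb_spec p x); [lia|ring].
Qed.

Definition lsum (L : list nat) (f : nat -> R) : R :=
  fold_right (fun i acc => f i + acc) 0 L.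

Lemma lsum_ext L f g : (forall i, In i L -> f i = g i) -> lsum L f = lsum L g.
Proof.
  induction L as [|a L IH]; intros Hfg; simpl; [reflexivity|].
  rewrite Hfg by (left; reflexivity). rewrite IH by (intros; apply Hfg; right; assumption).
  reflexivity.
Qed.

Lemma lsum_map h L f : lsum (map h L) f = lsum L (fun i => f (h i)).
Proof. induction L as [|a L IH]; simpl; [reflexivity|]. rewrite IH; reflexivity. Qed.

Lemma lsum_const L c : lsum L (fun _ => c) = INR (length L) * c.
Proof.
  induction L as [|a L IH]; [simpl; ring|].
  cbn [lsum fold_right length]. fold (lsum L (fun _ => c)).
  rewrite IH, S_INR; ring.
Qed.

Lemma lsum_le_rsum p L f : NoDup L -> (forall z, In z L -> (z < p)%nat) ->
  (forall z, 0 <= f z) -> lsum L f <= rsum p f.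
Proof.
  revert f; induction L as [|a L IH]; intros f Hnd Hlt Hf.
  - apply rsum_ge0; exact Hf.
  - apply NoDup_cons_iff in Hnd as [HaL Hnd].
    unfold lsum; cbn [fold_right]; fold (lsum L f).
    rewrite (rsum_extract p f a) by (apply Hlt; left; reflexivity).
    apply Rplus_le_compat_l.
    set (g := fun z => if Nat.eqb z a then 0 else f z).
    rewrite (lsum_ext L f g).
    + apply IH; [exact Hnd | intros; apply Hlt; right; assumption |].
      intros z; unfold g; destruct (Nat.eqb z a); [lra | apply Hf].
    + intros i Hi; unfold g.
      destruct (Nat.eqb_spec i a); [subst; contradiction | reflexivity].
Qed.

(* Distinct even indices below 2P have distinct halves below P. *)
Lemma rsum_ge_on_halves P E f c : NoDup E ->
  (forall i, In i E -> Nat.Even i /\ (i < 2 * P)%nat) ->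
  (forall z, 0 <= f z) -> (forall i, In i E -> f (i / 2)%nat = c) ->
  INR (length E) * c <= rsum P f.
Proof.
  intros Hnd HE Hf Hc.
  rewrite <- lsum_const, (lsum_ext E _ (fun i => f (i / 2)%nat))
    by (intros; symmetry; auto).
  rewrite <- lsum_map. apply lsum_le_rsum; [| | exact Hf].
  - apply NoDup_map_NoDup_ForallPairs; [|exact Hnd].
    intros i j Hi Hj Hij.
    destruct (HE i Hi) as [[a ->] _], (HE j Hj) as [[b ->] _].
    rewrite !(Nat.mul_comm 2), !Nat.div_mul in Hij by lia. lia.
  - intros z Hz. apply in_map_iff in Hz as (i & <- & Hi).
    destruct (HE i Hi) as [[a ->] Hlt].
    rewrite (Nat.mul_comm 2), Nat.div_mul by lia. lia.
Qed.

Lemma sqr_div_sqrt2 x : (x / sqrt 2) ^ 2 = x ^ 2 / 2.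
Proof.
  assert (H2 := sqrt_sqrt 2 ltac:(lra)).
  assert (sqrt 2 <> 0) by (intro Z; rewrite Z in H2; lra).
  replace ((x / sqrt 2) ^ 2) with (x ^ 2 / (sqrt 2 * sqrt 2)) by (field; auto).
  rewrite H2; reflexivity.
Qed.

Lemma pow2_pred m : (1 <= m)%nat -> (2 ^ m = 2 * 2 ^ (m - 1))%nat.
Proof. intros Hm. replace m with (S (m - 1)) at 1 by lia. reflexivity. Qed.

Lemma haar_step_above m v r : (2 ^ m <= r)%nat -> haar_step m v r = v r.
Proof.
  intros Hr. unfold haar_step.
  assert (2 ^ (m - 1) <= 2 ^ m)%nat by (apply Nat.pow_le_mono_r; lia).
  destruct (Nat.ltb_spec r (2 ^ (m - 1))); [lia|].
  destruct (Nat.ltb_spec r (2 ^ m)); [lia|reflexivity].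
Qed.

(* H_k is orthogonal: ((x+y)^2 + (x-y)^2)/2 = x^2 + y^2 for each pair. *)
Lemma haar_step_energy m v : (1 <= m)%nat ->
  rsum (2 ^ m) (fun r => haar_step m v r ^ 2) = rsum (2 ^ m) (fun r => v r ^ 2).
Proof.
  intros Hm. set (p := (2 ^ (m - 1))%nat).
  rewrite pow2_pred by exact Hm. fold p.
  rewrite (rsum_double p (fun r => v r ^ 2)).
  replace (2 * p)%nat with (p + p)%nat by lia.
  rewrite (rsum_add p p), <- rsum_plus. apply rsum_ext. intros i Hi.
  assert (p + p = 2 ^ m)%nat by (unfold p; rewrite (pow2_pred m Hm); lia).
  unfold haar_step. fold p.
  destruct (Nat.ltb_spec i p); [|lia].
  destruct (Nat.ltb_spec (p + i) p); [lia|].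
  destruct (Nat.ltb_spec (p + i) (2 ^ m)); [|lia].
  replace (p + i - p)%nat with i by lia.
  rewrite !sqr_div_sqrt2; field.
Qed.

Lemma haar_step_energy_prefix m j v : (1 <= m <= j)%nat ->
  rsum (2 ^ j) (fun r => haar_step m v r ^ 2) = rsum (2 ^ j) (fun r => v r ^ 2).
Proof.
  intros Hmj.
  assert (2 ^ m <= 2 ^ j)%nat by (apply Nat.pow_le_mono_r; lia).
  replace (2 ^ j)%nat with (2 ^ m + (2 ^ j - 2 ^ m))%nat by lia.
  rewrite !rsum_add, haar_step_energy by lia. f_equal.
  apply rsum_ext; intros i _. rewrite haar_step_above by lia. reflexivity.
Qed.

Lemma W_upto_above n k v r : (1 <= k <= n)%nat -> (2 ^ (n - 1) <= r)%nat ->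
  W_upto n k v r = Wk n 1 v r.
Proof.
  induction k as [|k IH]; intros Hk Hr; [lia|].
  destruct (Nat.eq_dec k 0) as [->|Hk0]; [reflexivity|].
  cbn [W_upto]; unfold Wk at 1.
  assert (2 ^ (n - S k + 1) <= 2 ^ (n - 1))%nat by (apply Nat.pow_le_mono_r; lia).
  rewrite haar_step_above by lia. apply IH; lia.
Qed.

Lemma W_upto_low_energy n k v : (1 <= k <= n)%nat ->
  rsum (2 ^ (n - 1)) (fun r => W_upto n k v r ^ 2)
  = rsum (2 ^ (n - 1)) (fun r => Wk n 1 v r ^ 2).
Proof.
  induction k as [|k IH]; intros Hk; [lia|].
  destruct (Nat.eq_dec k 0) as [->|Hk0]; [reflexivity|].
  cbn [W_upto]; unfold Wk at 1.
  rewrite haar_step_energy_prefix by lia. apply IH; lia.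
Qed.

Lemma Wk1_low n v j : (1 <= n)%nat -> (j < 2 ^ (n - 1))%nat ->
  Wk n 1 v j = (v (2 * j)%nat + v (2 * j + 1)%nat) / sqrt 2.
Proof.
  intros Hn Hj. unfold Wk, haar_step. replace (n - 1 + 1)%nat with n by lia.
  destruct (Nat.ltb_spec j (2 ^ (n - 1))); [reflexivity|lia].
Qed.

Lemma Wk1_high n v j : (1 <= n)%nat -> (j < 2 ^ (n - 1))%nat ->
  Wk n 1 v (2 ^ (n - 1) + j)
  = (v (2 * j)%nat - v (2 * j + 1)%nat) / sqrt 2.
Proof.
  intros Hn Hj. unfold Wk, haar_step. replace (n - 1 + 1)%nat with n by lia.
  assert (Hp := pow2_pred n Hn).
  destruct (Nat.ltb_spec (2 ^ (n - 1) + j) (2 ^ (n - 1))); [lia|].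
  destruct (Nat.ltb_spec (2 ^ (n - 1) + j) (2 ^ n)); [|lia].
  replace (2 ^ (n - 1) + j - 2 ^ (n - 1))%nat with j by lia. reflexivity.
Qed.

Lemma sgn_sqr b : sgn b ^ 2 = 1.
Proof. destruct b; simpl; ring. Qed.

Lemma lam_on_pair N M E S theta i : In i E ->
  lam N M E S theta i = a_k N M theta * sgn (S i) /\
  lam N M E S theta (i + 1)%nat = a_k N M theta * sgn (S (i + 1)%nat).
Proof.
  intros Hi. unfold lam, inA.
  assert (Hz : forall z, orb (Nat.eqb z i) (Nat.eqb z (i + 1)) = true ->
    existsb (fun i => orb (Nat.eqb z i) (Nat.eqb z (i + 1))) E = true)
    by (intros z Hz; apply existsb_exists; exists i; auto).
  rewrite !Hz by (rewrite Nat.eqb_refl; auto using Bool.orb_true_r).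
  split; reflexivity.
Qed.

Section FirstLevel.

Variables (n N M : nat) (E : list nat) (S : nat -> bool) (theta : R).
Hypothesis Hn : (1 <= n)%nat.
Hypothesis HEnodup : NoDup E.
Hypothesis HEeven : forall i, In i E -> Nat.Even i /\ (i < 2 ^ n)%nat.

Let l := lam N M E S theta.
Let a := a_k N M theta.

Lemma E_even_lt_double : forall i, In i E -> Nat.Even i /\ (i < 2 * 2 ^ (n - 1))%nat.
Proof. rewrite <- pow2_pred by exact Hn. exact HEeven. Qed.

Lemma Wk1_low_energy_constant : (forall i, In i E -> S i = S (i + 1)%nat) ->
  INR (length E) * (2 * a ^ 2) <= rsum (2 ^ (n - 1)) (fun z => Wk n 1 l z ^ 2).
Proof.
  intros HS. apply (rsum_ge_on_halves _ E); auto using E_even_lt_double, pow2_ge_0.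
  intros i Hi. destruct (E_even_lt_double i Hi) as [[j ->] Hj].
  destruct (lam_on_pair N M E S theta _ Hi) as [Hl0 Hl1].
  rewrite <- HS in Hl1 by exact Hi.
  rewrite (Nat.mul_comm 2 j), Nat.div_mul by lia.
  rewrite Wk1_low by lia. fold l a in Hl0, Hl1. rewrite Hl0, Hl1, sqr_div_sqrt2.
  replace ((a * sgn (S (2 * j)%nat) + a * sgn (S (2 * j)%nat)) ^ 2 / 2)
    with (2 * a ^ 2 * sgn (S (2 * j)%nat) ^ 2) by field.
  rewrite sgn_sqr; ring.
Qed.

Lemma Wk1_high_energy_balanced : (forall i, In i E -> S i <> S (i + 1)%nat) ->
  INR (length E) * (2 * a ^ 2)
  <= rsum (2 ^ (n - 1)) (fun z => Wk n 1 l (2 ^ (n - 1) + z)%nat ^ 2).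
Proof.
  intros HS. apply (rsum_ge_on_halves _ E); auto using E_even_lt_double, pow2_ge_0.
  intros i Hi. specialize (HS i Hi). destruct (E_even_lt_double i Hi) as [[j ->] Hj].
  destruct (lam_on_pair N M E S theta _ Hi) as [Hl0 Hl1].
  rewrite (Nat.mul_comm 2 j), Nat.div_mul by lia.
  rewrite Wk1_high by lia. fold l a in Hl0, Hl1. rewrite Hl0, Hl1, sqr_div_sqrt2.
  destruct (S (2 * j)%nat), (S (2 * j + 1)%nat); [congruence| | |congruence];
    simpl; field.
Qed.

End FirstLevel.

Lemma kIter_near_half_pi theta : 0 < theta ->
  Rabs ((2 * INR (kIter theta) + 1) * theta - PI / 2) <= theta.
Proof.
  intros Ht. set (x := PI / (4 * theta)).
  assert (Hx : 0 <= x) by (unfold x; pose proof PI_RGT_0;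
    apply Rle_mult_inv_pos; lra).
  destruct (base_Int_part x) as [B1 B2].
  assert (Hz : (0 <= Int_part x)%Z)
    by (cut (-1 < Int_part x)%Z; [lia | apply lt_IZR; simpl; lra]).
  assert (Hk : INR (kIter theta) = IZR (Int_part x))
    by (unfold kIter; fold x; rewrite INR_IZR_INZ, Z2Nat.id by exact Hz; reflexivity).
  assert (Hpi : x * (4 * theta) = PI) by (unfold x; field; lra).
  rewrite Hk. apply Rabs_le. split; nra.
Qed.

Lemma sin_kIter_sqr_ge theta : 0 < theta < PI / 2 ->
  cos theta ^ 2 <= sin ((2 * INR (kIter theta) + 1) * theta) ^ 2.
Proof.
  intros Ht. set (d := (2 * INR (kIter theta) + 1) * theta - PI / 2).
  assert (Hd := kIter_near_half_pi theta (proj1 Ht)). fold d in Hd.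
  replace ((2 * INR (kIter theta) + 1) * theta) with (d + PI / 2) by (unfold d; ring).
  rewrite sin_plus, sin_PI2, cos_PI2, Rmult_0_r, Rplus_0_l, Rmult_1_r.
  assert (Hcos : cos theta <= cos d).
  { replace (cos d) with (cos (Rabs d))
      by (unfold Rabs; destruct (Rcase_abs d); [apply cos_neg | reflexivity]).
    apply cos_decr_1; pose proof PI_RGT_0; pose proof (Rabs_pos d); lra. }
  assert (0 <= cos theta) by (apply cos_ge_0; lra).
  nra.
Qed.

Lemma a_k_energy N M theta : (1 <= M)%nat ->
  INR M * (2 * a_k N M theta ^ 2) = sin ((2 * INR (kIter theta) + 1) * theta) ^ 2.
Proof.
  intros HM. assert (1 <= INR M) by (apply (le_INR 1); exact HM).
  unfold a_k. set (s := sin _).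
  assert (Hr := sqrt_sqrt (2 * INR M) ltac:(lra)).
  assert (sqrt (2 * INR M) <> 0) by (intro Z; rewrite Z in Hr; lra).
  replace ((s / sqrt (2 * INR M)) ^ 2)
    with (s ^ 2 / (sqrt (2 * INR M) * sqrt (2 * INR M))) by (field; auto).
  rewrite Hr. field. lra.
Qed.

Lemma cos_sqr_of_sin_sqrt theta x : 0 <= x -> sin theta = sqrt x ->
  cos theta ^ 2 = 1 - x.
Proof.
  intros Hx Hs. assert (H := sin2_cos2 theta). unfold Rsqr in H.
  rewrite Hs, sqrt_sqrt in H by exact Hx. lra.
Qed.

Theorem mainTheorem19
  (n M : nat) (E : list nat) (S : nat -> bool) (theta : R)
  (Hn : (1 <= n)%nat)
  (HM : (1 <= M)%nat)
  (HMN : (2 * M < 2 ^ n)%nat)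
  (HEnodup : NoDup E)
  (HElen : length E = M)
  (HEeven : forall i, In i E -> Nat.Even i /\ (i < 2 ^ n)%nat)
  (Htheta : 0 < theta < PI / 2)
  (Hsin : sin theta = sqrt (2 * INR M / INR (2 ^ n))) :
  let N := (2 ^ n)%nat in
  let l := lam N M E S theta in
  ((forall i, In i E -> S i = S (i + 1)%nat) ->
     lowEnergy N (haarW n l) >= 1 - 2 * INR M / INR N) /\
  ((forall i, In i E -> S i <> S (i + 1)%nat) ->
     highEnergy N (haarW n l) >= 1 - 2 * INR M / INR N) /\
  ((forall i, In i E -> S i = S (i + 1)%nat) ->
     lowEnergy N (Wk n 1 l) >= 1 - 2 * INR M / INR N) /\
  ((forall i, In i E -> S i <> S (i + 1)%nat) ->
     highEnergy N (Wk n 1 l) >= 1 - 2 * INR M / INR N).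
Proof.
  intros N l.
  assert (HN : (N / 2 = 2 ^ (n - 1) /\ N - N / 2 = 2 ^ (n - 1))%nat).
  { unfold N; rewrite pow2_pred, Nat.mul_comm, Nat.div_mul by lia; lia. }
  assert (Hbound : 1 - 2 * INR M / INR N <= INR (length E) * (2 * a_k N M theta ^ 2)).
  { unfold N. assert (0 < INR (2 ^ n)) by (apply lt_0_INR; lia).
    assert (1 <= INR M) by (apply (le_INR 1); exact HM).
    assert (Hratio : 0 <= 2 * INR M / INR (2 ^ n)) by (apply Rle_mult_inv_pos; lra).
    rewrite HElen, a_k_energy, <- (cos_sqr_of_sin_sqrt theta _ Hratio Hsin) by exact HM.
    apply sin_kIter_sqr_ge; exact Htheta. }
  unfold lowEnergy, highEnergy; destruct HN as [-> ->].
  assert (Hhigh : rsum (2 ^ (n - 1)) (fun z => haarW n l (2 ^ (n - 1) + z)%nat ^ 2)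
    = rsum (2 ^ (n - 1)) (fun z => Wk n 1 l (2 ^ (n - 1) + z)%nat ^ 2)).
  { apply rsum_ext; intros; unfold haarW; rewrite W_upto_above by lia; reflexivity. }
  unfold haarW; rewrite W_upto_low_energy by lia; fold (haarW n l); rewrite Hhigh.
  assert (Hlow := Wk1_low_energy_constant n N M E S theta Hn HEnodup HEeven).
  assert (Hbal := Wk1_high_energy_balanced n N M E S theta Hn HEnodup HEeven).
  repeat split; intros HS; apply Rle_ge; eapply Rle_trans; eauto.
Qed.
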